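(* Let $G$ be a finite simple graph on $[n]$, $w:E(G)\to\mathbb Z_{>0}$ a weight function, $\Bbbk$ a field, $S=\Bbbk[x_1,\ldots,x_n]$ and $I(G_w)=\big((x_ix_j)^{w(i,j)}\mid\{i,j\}\in E(G)\big)$. Let $x^{\mathbf a}$ be a monomial not in $I(G_w)$ and let $U=\{i\mid\text{there exists } j \text{ with }\{i,j\}\in E(G)\text{ and } a_i<w(i,j)\le a_j\}$. Then $$\sqrt{I(G_w):x^{\mathbf a}}=I(G\setminus U)+(x_i\mid i\in U),$$ where $I(G\setminus U)$ is the edge ideal of the induced subgraph of $G$ on $[n]\setminus U$.
   Context: The edge ideal of a graph $H$ is $(x_ix_j\mid\{i,j\}\in E(H))$. $w(i,j)$ denotes the weight of edge $\{i,j\}$. *)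

From HB Require Import structures.
From mathcomp Require Import all_boot all_order all_algebra.
From mathcomp Require Import mpoly.
Set Implicit Arguments. Unset Strict Implicit. Unset Printing Implicit Defensive.
Import GRing.Theory.
Local Open Scope ring_scope.

Definition gen_ideal (R : comNzRingType) (s : seq R) : R -> Prop :=
  fun p => exists c : 'I_(size s) -> R, p = \sum_(i < size s) c i * s`_i.

Definition colon_ideal (R : comNzRingType) (I : R -> Prop) (f : R) : R -> Prop :=
  fun p => I (p * f).

Definition rad_ideal (R : comNzRingType) (I : R -> Prop) : R -> Prop :=
  fun p => exists m : nat, I (p ^+ m).

(* A finite simple graph on [n] is a symmetric irreflexive relation E on 'I_n.
   Edges {i,j} are listed once, as pairs (i,j) with i < j. *)
Definition edges (n : nat) (E : rel 'I_n) : seq ('I_n * 'I_n) :=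
  enum [pred ij : 'I_n * 'I_n | (ij.1 < ij.2)%N && E ij.1 ij.2].

Definition wedge_gens (K : fieldType) (n : nat) (E : rel 'I_n)
  (w : 'I_n -> 'I_n -> nat) : seq {mpoly K[n]} :=
  [seq ('X_ij.1 * 'X_ij.2) ^+ (w ij.1 ij.2) | ij <- edges E].

Definition induced_edge_gens (K : fieldType) (n : nat) (E : rel 'I_n)
  (U : {set 'I_n}) : seq {mpoly K[n]} :=
  [seq 'X_ij.1 * 'X_ij.2 | ij <- edges E & (ij.1 \notin U) && (ij.2 \notin U)].

Definition var_gens (K : fieldType) (n : nat) (U : {set 'I_n}) : seq {mpoly K[n]} :=
  [seq 'X_i | i <- enum U].

(* I = I(G_w) is a monomial ideal, so a polynomial lies in it iff
   every monomial of its support is divisible by some (x_i x_j)^w(i,j).  For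
   "contains", it suffices to check the generators: (x_i x_j)^w(i,j) lies in I,
   and for i in U with witness j the product x_i^w(i,j) x^a is divisible by
   (x_i x_j)^w(i,j) since w(i,j) <= a_j.  Conversely let p^m x^a lie in I and let
   x^b be a monomial of p outside the right-hand side J: the support of b is then
   a stable set of G disjoint from U.  Setting the variables outside supp b to zero
   is a ring morphism that does not kill p, hence does not kill p^m, so p^m has a
   monomial x^c with supp c inside supp b.  Some (x_i x_j)^w(i,j) divides x^(a+c),
   and as c vanishes on U and on one endpoint of every edge at which it is
   nonzero, w(i,j) <= a_i and w(i,j) <= a_j: x^a lies in I, a contradiction. *)

From HB Require Import structures.
From mathcomp Require Import all_boot all_order all_algebra.
From mathcomp Require Import mpoly.
From mathcomp Require Import ring zify.
Set Implicit Arguments. Unset Strict Implicit. Unset Printing Implicit Defensive.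
Import GRing.Theory.
Local Open Scope ring_scope.

Section GenIdeal.
Variables (R : comNzRingType) (s : seq R).

Lemma gen_ideal0 : gen_ideal s 0.
Proof. by exists (fun _ => 0); rewrite big1 // => i _; rewrite mul0r. Qed.

Lemma gen_idealD p q : gen_ideal s p -> gen_ideal s q -> gen_ideal s (p + q).
Proof.
move=> [c ->] [d ->]; exists (fun i => c i + d i); rewrite -big_split.
by apply: eq_bigr => i _; rewrite mulrDl.
Qed.

Lemma gen_idealMl r p : gen_ideal s p -> gen_ideal s (r * p).
Proof.
move=> [c ->]; exists (fun i => r * c i); rewrite mulr_sumr.
by apply: eq_bigr => i _; rewrite mulrA.
Qed.

Lemma mem_gen_ideal x : x \in s -> gen_ideal s x.
Proof.
move=> xs; pose k := Ordinal (etrans (index_mem x s) xs).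
exists (fun i => (i == k)%:R); rewrite (bigD1 k) //= eqxx mul1r nth_index //.
by rewrite big1 ?addr0 // => i /negbTE ->; rewrite mul0r.
Qed.

Lemma gen_ideal_min (I : R -> Prop) :
  I 0 -> (forall x y, I x -> I y -> I (x + y)) -> (forall r x, I x -> I (r * x)) ->
  (forall x, x \in s -> I x) -> forall p, gen_ideal s p -> I p.
Proof.
move=> I0 ID IM Is p [c ->]; apply: big_ind => // i _.
by apply: IM; apply: Is; apply: mem_nth.
Qed.

End GenIdeal.

Section RadicalColon.
Variables (R : comNzRingType) (s : seq R) (f : R).
Local Notation J := (rad_ideal (colon_ideal (gen_ideal s) f)).

Lemma rad_colon0 : J 0.
Proof. by exists 1%N; rewrite /colon_ideal mul0r; apply: gen_ideal0. Qed.

Lemma rad_colonMl r x : J x -> J (r * x).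
Proof.
by move=> [m Hm]; exists m; rewrite /colon_ideal exprMn -mulrA; apply: gen_idealMl.
Qed.

(* Every term of the binomial expansion of (x + y)^(m1 + m2) is divisible
   by x^m1 or by y^m2. *)
Lemma rad_colonD x y : J x -> J y -> J (x + y).
Proof.
move=> [m1 Hx] [m2 Hy]; exists (m1 + m2)%N.
rewrite /colon_ideal exprDn mulr_suml.
apply: big_ind => [|u v|i _]; [exact: gen_ideal0 | exact: gen_idealD |].
rewrite -mulr_natr; have [le_m2i|lt_im2] := leqP m2 i.
  have -> : x ^+ (m1 + m2 - i) * y ^+ i * ('C(m1 + m2, i))%:R * f
      = x ^+ (m1 + m2 - i) * y ^+ (i - m2) * ('C(m1 + m2, i))%:R * (y ^+ m2 * f).
    by rewrite -[in y ^+ i](subnK le_m2i) exprD; ring.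
  exact: gen_idealMl.
have -> : x ^+ (m1 + m2 - i) * y ^+ i * ('C(m1 + m2, i))%:R * f
    = x ^+ (m1 + m2 - i - m1) * y ^+ i * ('C(m1 + m2, i))%:R * (x ^+ m1 * f).
  have le_m1 : (m1 <= m1 + m2 - i)%N by lia.
  by rewrite -[in x ^+ (m1 + m2 - i)](subnK le_m1) exprD; ring.
exact: gen_idealMl.
Qed.

Lemma gen_ideal_sub_rad_colon t :
  (forall x, x \in t -> J x) -> forall p, gen_ideal t p -> J p.
Proof. exact: gen_ideal_min rad_colon0 rad_colonD rad_colonMl. Qed.

End RadicalColon.

Section MonomialIdeal.
Variables (R : comNzRingType) (n : nat).
Implicit Types (p : {mpoly R[n]}) (ms : seq 'X_{1..n}).

Lemma monomial_idealP ms p :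
  gen_ideal [seq 'X_[m] | m <- ms] p <->
  {in msupp p, forall b, has (fun g => (g <= b)%MM) ms}.
Proof.
split=> [[c ->] b /msupp_sum_le /flattenP [_ /mapP [i _ ->]]|ms_le].
  have lt_i : (i < size ms)%N by rewrite -(size_map (fun m => 'X_[m] : {mpoly R[n]})).
  rewrite (nth_map 0%MM) // (perm_mem (msuppMX _ _)) => /mapP [m _ ->].
  by apply/hasP; exists (nth 0%MM ms i); [apply: mem_nth | apply: lem_addr].
rewrite [p]mpolyE big_seq.
apply: big_ind => [|u v|m mp]; [exact: gen_ideal0 | exact: gen_idealD |].
have /hasP [g gms le_gm] := ms_le m mp.
rewrite -(submK le_gm) mpolyXD -mul_mpolyC mulrA; apply: gen_idealMl.
by apply: mem_gen_ideal; apply: map_f.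
Qed.

Lemma monomial_idealX ms m :
  gen_ideal [seq 'X_[g] | g <- ms] ('X_[m] : {mpoly R[n]}) <-> has (fun g => (g <= m)%MM) ms.
Proof.
rewrite monomial_idealP msuppX; split=> [|h b]; first by apply; rewrite mem_head.
by rewrite mem_seq1 => /eqP ->.
Qed.

End MonomialIdeal.

Section KillVariables.
Variables (R : idomainType) (n : nat) (S : {set 'I_n}).
Implicit Types (p : {mpoly R[n]}) (m : 'X_{1..n}).

Definition kill_vars : n.-tuple {mpoly R[n]} := [tuple if i \in S then 0 else 'X_i | i < n].

Definition avoids m := [forall i in S, m i == 0%N].

Lemma comp_kill_varsX m : 'X_[m] \mPo kill_vars = if avoids m then 'X_[m] else 0.
Proof.
rewrite comp_mpolyX; case: ifP => [/forall_inP m_S0 | /negbT /forall_inPn [i iS mi]].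
  rewrite mpolyXE_id; apply: eq_bigr => i _; rewrite tnth_mktuple.
  by case: ifP => // iS; rewrite (eqP (m_S0 i iS)) !expr0.
by rewrite (bigD1 i) //= tnth_mktuple iS expr0n (negbTE mi) mul0r.
Qed.

Lemma mcoeff_comp_kill_vars p c :
  (p \mPo kill_vars)@_c = if avoids c then p@_c else 0.
Proof.
rewrite comp_mpolyEX raddf_sum /=.
rewrite (eq_bigr (fun m => p@_m * (avoids m && (m == c))%:R)) => [|m _]; last first.
  by rewrite mcoeffZ comp_kill_varsX; case: ifP; rewrite ?mcoeffX ?mcoeff0.
have [cp|cNp] := boolP (c \in msupp p).
  rewrite (bigD1_seq c) ?msupp_uniq //= eqxx andbT big1 => [|m /negbTE ->]; last first.
    by rewrite andbF mulr0.
  by rewrite addr0; case: ifP; rewrite ?mulr1 ?mulr0.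
rewrite big1_seq => [|m /andP [_ mp]]; first by rewrite (memN_msupp_eq0 cNp) if_same.
have /negbTE -> : m != c by apply: contraNneq cNp => <-.
by rewrite andbF mulr0.
Qed.

(* Setting the variables of S to zero is a ring morphism into a domain: it cannot
   kill p^k without killing p. *)
Lemma avoiding_msupp_exp p k b :
  b \in msupp p -> avoids b -> exists2 c, c \in msupp (p ^+ k) & avoids c.
Proof.
move=> bp avb.
have kill_p : p \mPo kill_vars != 0.
  apply: contraTneq bp => kill0; have := mcoeff_comp_kill_vars p b.
  by rewrite avb kill0 mcoeff0 mcoeff_msupp => <-; rewrite eqxx.
have : (p ^+ k) \mPo kill_vars != 0 by rewrite rmorphXn expf_neq0.
rewrite -msupp_eq0; case E: (msupp _) => [//|c cs] _.
have : c \in msupp ((p ^+ k) \mPo kill_vars) by rewrite E mem_head.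
rewrite mcoeff_msupp mcoeff_comp_kill_vars.
by case: ifP => [avc pc | _]; [exists c; rewrite ?mcoeff_msupp | rewrite eqxx].
Qed.

End KillVariables.

Lemma mem_edges n (E : rel 'I_n) i j : ((i, j) \in edges E) = (i < j)%N && E i j.
Proof. by rewrite /edges mem_enum inE. Qed.

Definition edge_mon n (i j : 'I_n) : 'X_{1..n} := (U_(i) + U_(j))%MM.

Lemma edge_mon_le n (i j : 'I_n) k m : i != j ->
  (edge_mon i j *+ k <= m)%MM = (k <= m i)%N && (k <= m j)%N.
Proof.
move=> neq_ij; have neq_ji := neq_ij; rewrite eq_sym in neq_ji.
apply/mnm_lepP/andP => [le_m | [le_i le_j] l].
  have := le_m i; have := le_m j.
  by rewrite !mulmnE !mnmDE !mnm1E !eqxx (negbTE neq_ij) (negbTE neq_ji) !mul1n.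
rewrite mulmnE mnmDE !mnm1E.
have [<-|ne_il] := eqVneq i l; first by rewrite (negbTE neq_ji) addn0 mul1n.
have [<-|ne_jl] := eqVneq j l; first by rewrite add0n mul1n.
by rewrite addn0 mul0n.
Qed.

Definition deficient_vertices n (E : rel 'I_n) (w : 'I_n -> 'I_n -> nat) (a : 'X_{1..n}) :=
  [set i : 'I_n | [exists j : 'I_n, E i j && ((a i < w i j)%N && (w i j <= a j)%N)]].

Section WeightedEdgeIdeal.
Variables (K : fieldType) (n : nat) (E : rel 'I_n) (w : 'I_n -> 'I_n -> nat) (a : 'X_{1..n}).
Hypotheses (E_sym : forall i j, E i j = E j i) (E_irr : forall i, ~~ E i i)
  (w_sym : forall i j, E i j -> w i j = w j i).

Local Notation U := (deficient_vertices E w a).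
Local Notation I := (gen_ideal (wedge_gens K E w)).

Definition wedge_mons := [seq (edge_mon ij.1 ij.2 *+ w ij.1 ij.2)%MM | ij <- edges E].

Definition cover_mons :=
  [seq edge_mon ij.1 ij.2 | ij <- edges E & (ij.1 \notin U) && (ij.2 \notin U)]
  ++ [seq U_(i)%MM | i <- enum U].

Lemma wedge_gensE : wedge_gens K E w = [seq 'X_[m] | m <- wedge_mons].
Proof.
by rewrite /wedge_gens -map_comp; apply: eq_map => ij /=; rewrite -mpolyXn mpolyXD.
Qed.

Lemma cover_gensE :
  induced_edge_gens K E U ++ var_gens K U = [seq 'X_[m] | m <- cover_mons].
Proof.
rewrite map_cat -!map_comp; congr (_ ++ _).
by apply: eq_map => ij /=; rewrite mpolyXD.
Qed.

Lemma wedge_ideal_edge i j : E i j -> I (('X_i * 'X_j) ^+ w i j).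
Proof.
move=> Eij; have [lt_ij|lt_ji|eq_ij] := ltngtP i j.
- by apply: mem_gen_ideal; apply/mapP; exists (i, j); rewrite ?mem_edges ?lt_ij.
- rewrite mulrC w_sym //; apply: mem_gen_ideal; apply/mapP; exists (j, i) => //.
  by rewrite mem_edges lt_ji -E_sym.
- by move: Eij; rewrite (val_inj eq_ij) (negbTE (E_irr j)).
Qed.

Definition stable_support (b : 'X_{1..n}) :=
  forall k, b k != 0%N -> k \notin U /\ forall l, E k l -> b l = 0%N.

Lemma cover_monsPn b : ~~ has (fun g => (g <= b)%MM) cover_mons -> stable_support b.
Proof.
move=> b_free.
have b_offU k : b k != 0%N -> k \notin U.
  move=> bk; apply: contra b_free => kU; apply/hasP; exists U_(k)%MM; last by rewrite lep1mP.
  by rewrite mem_cat map_f ?orbT // mem_enum.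
move=> k bk; split=> [|l Ekl]; first exact: b_offU.
apply/eqP; apply: contraNT b_free => bl.
have edge_le i j : i != j -> b i != 0%N -> b j != 0%N -> (edge_mon i j <= b)%MM.
  by move=> neq_ij bi bj; rewrite -[edge_mon i j]mulm1n edge_mon_le // !lt0n bi bj.
have mem_cover i j : E i j -> (i < j)%N -> b i != 0%N -> b j != 0%N ->
    edge_mon i j \in cover_mons.
  move=> Eij lt_ij bi bj; rewrite mem_cat; apply/orP; left.
  apply/mapP; exists (i, j) => //.
  by rewrite mem_filter /= !b_offU // mem_edges lt_ij.
apply/hasP; have [lt_kl|lt_lk|eq_kl] := ltngtP k l.
- by exists (edge_mon k l); [apply: mem_cover | apply: edge_le; rewrite // neq_ltn lt_kl].
- exists (edge_mon l k); first by apply: mem_cover; rewrite // -E_sym.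
  by apply: edge_le; rewrite // neq_ltn lt_lk.
- by move: Ekl; rewrite (val_inj eq_kl) (negbTE (E_irr l)).
Qed.

(* If a_i < w(i,j), then c_i > 0, so i is not in U; this forces a_j < w(i,j),
   hence c_j > 0 as well, and the support of c would contain the edge {i,j}. *)
Lemma stable_support_wedge c i j : stable_support c -> E i j ->
  (w i j <= a i + c i)%N -> (w i j <= a j + c j)%N -> (w i j <= a i)%N.
Proof.
move=> c_stable Eij le_i le_j; rewrite leqNgt; apply/negP => lt_ai.
have ci : c i != 0%N by apply: contraTneq le_i => ->; rewrite addn0 -ltnNge.
have [iNU c_nbr] := c_stable i ci.
have lt_aj : (a j < w i j)%N.
  rewrite ltnNge; apply: contra iNU => le_aj; rewrite inE.
  by apply/existsP; exists j; rewrite Eij lt_ai le_aj.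
by move: le_j; rewrite (c_nbr j Eij) addn0 leqNgt lt_aj.
Qed.

Lemma rad_colon_wedge_sub_cover p :
  ~ I 'X_[a] -> rad_ideal (colon_ideal I 'X_[a]) p ->
  gen_ideal (induced_edge_gens K E U ++ var_gens K U) p.
Proof.
move=> aNI [m]; rewrite /colon_ideal wedge_gensE cover_gensE => /monomial_idealP pm_I.
apply/monomial_idealP => b bp; apply/negPn/negP => /cover_monsPn b_stable.
have avb : avoids [set k | b k == 0%N] b by apply/forall_inP => k; rewrite inE.
have [c cp avc] := avoiding_msupp_exp m bp avb.
have c_supp l : b l = 0%N -> c l = 0%N.
  by move=> bl; apply/eqP/(forall_inP avc); rewrite inE bl.
have c_stable : stable_support c.
  move=> k ck; have [|kNU b_nbr] := b_stable k; first by apply: contra ck => /eqP/c_supp ->.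
  by split=> // l /b_nbr /c_supp.
have ac_supp : (a + c)%MM \in msupp (p ^+ m * 'X_[a]).
  by rewrite (perm_mem (msuppMX _ _)) map_f.
have /hasP [_ /mapP [[i j] ij_E ->] /=] := pm_I _ ac_supp.
rewrite mem_edges in ij_E; case/andP: ij_E => lt_ij Eij.
have neq_ij : i != j by rewrite neq_ltn lt_ij.
rewrite edge_mon_le // !mnmDE => /andP [le_i le_j].
apply: aNI; rewrite wedge_gensE monomial_idealX; apply/hasP.
exists (edge_mon i j *+ w i j)%MM.
  by apply/mapP; exists (i, j); rewrite ?mem_edges ?lt_ij.
rewrite edge_mon_le //; apply/andP; split; first exact: stable_support_wedge le_i le_j.
have Eji : E j i by rewrite E_sym.
by rewrite w_sym // in le_i le_j *; apply: stable_support_wedge c_stable Eji le_j le_i.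
Qed.

Lemma cover_sub_rad_colon_wedge p :
  gen_ideal (induced_edge_gens K E U ++ var_gens K U) p ->
  rad_ideal (colon_ideal I 'X_[a]) p.
Proof.
apply: gen_ideal_sub_rad_colon => x; rewrite mem_cat => /orP [] /mapP [].
  move=> [i j]; rewrite mem_filter mem_edges => /andP [_ /andP [_ Eij]] ->.
  by exists (w i j); rewrite /colon_ideal mulrC; apply/gen_idealMl/wedge_ideal_edge.
move=> k; rewrite mem_enum inE => /existsP [j /andP [Ekj /andP [_ le_wa]]] ->.
have le_ja : (U_(j) *+ w k j <= a)%MM.
  apply/mnm_lepP => l; rewrite mulmnE mnm1E.
  by case: (eqVneq j l) => [<-|_]; rewrite ?mul1n ?mul0n.
exists (w k j); rewrite /colon_ideal -(submK le_ja) mpolyXD -mpolyXn mulrCA -exprMn.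
by apply/gen_idealMl/wedge_ideal_edge.
Qed.

End WeightedEdgeIdeal.

Theorem lemma2p13 (K : fieldType) (n : nat) (E : rel 'I_n)
  (E_sym : forall i j, E i j = E j i) (E_irr : forall i, ~~ E i i)
  (w : 'I_n -> 'I_n -> nat)
  (w_sym : forall i j, E i j -> w i j = w j i)
  (w_pos : forall i j, E i j -> (0 < w i j)%N)
  (a : 'X_{1..n})
  (ha : ~ gen_ideal (wedge_gens K E w) 'X_[a]) :
  let U := [set i : 'I_n | [exists j : 'I_n, E i j && ((a i < w i j)%N && (w i j <= a j)%N)]] in
  forall p : {mpoly K[n]},
    rad_ideal (colon_ideal (gen_ideal (wedge_gens K E w)) 'X_[a]) p <->
    gen_ideal (induced_edge_gens K E U ++ var_gens K U) p.
Proof.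
move=> U p; split.
  exact: rad_colon_wedge_sub_cover E_sym E_irr w_sym p ha.
exact: cover_sub_rad_colon_wedge E_sym E_irr w_sym p.
Qed.
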